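(* Let $S\subset\mathbb{R}^d$ be a $d$-simplex that is lattice complete with respect to a $d$-dimensional lattice $\Lambda$. Then the diameter directions of $S$ span $\mathbb{R}^d$.
   Context: A lattice $\Lambda\subset\mathbb{R}^d$ is a discrete subgroup spanning $\mathbb{R}^d$. A segment $[a,b]$ is a lattice segment if $b-a$ is parallel to a nonzero vector of $\Lambda$; its lattice length is $|b-a|/|v|$ where $v$ generates $\Lambda\cap\mathrm{span}\{b-a\}$ and is a positive multiple of $b-a$. For a convex body $C$ (compact convex, non-empty interior), $\mathrm{diam}_\Lambda(C)$ is the maximum lattice length of a lattice segment in $C$; a diameter direction of $C$ is a $v\in\Lambda\setminus\{0\}$ such that $C$ contains a segment $[a,a+\mathrm{diam}_\Lambda(C)v]$. $C$ is lattice complete if no convex body $C'\supsetneq C$ has $\mathrm{diam}_\Lambda(C')=\mathrm{diam}_\Lambda(C)$. *)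

From HB Require Import structures.
From mathcomp Require Import all_boot all_order all_algebra.
From mathcomp Require Import all_classical all_reals all_analysis.
Set Implicit Arguments. Unset Strict Implicit. Unset Printing Implicit Defensive.
Import Order.TTheory GRing.Theory Num.Theory.
Import numFieldNormedType.Exports.
Local Open Scope classical_set_scope.
Local Open Scope ring_scope.

Section Defs.
Variables (R : realType) (d : nat).
Notation V := 'rV[R]_d.

Definition lattice_of (B : 'M[R]_d) : set V :=
  [set v | exists z : 'rV[R]_d, (forall j, z 0 j \is a Num.int) /\ v = z *m B].

Definition convex (C : set V) : Prop :=
  forall x y s, C x -> C y -> 0 <= s <= 1 -> C ((1 - s) *: x + s *: y).

Definition convex_body (C : set V) : Prop :=
  compact C /\ convex C /\ (interior C !=set0).

Definition segment (a b : V) : set V :=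
  [set a + s *: (b - a) | s in [set s : R | 0 <= s <= 1]].

(* v is nonzero and generates the group Lambda ∩ span{v}:
   every lattice point t v on the line is an integer multiple of v *)
Definition primitive (L : set V) (v : V) : Prop :=
  L v /\ v != 0 /\ forall t : R, L (t *: v) -> t \is a Num.int.

Definition lattice_segment_length (L : set V) (a b : V) (t : R) : Prop :=
  exists v, primitive L v /\ 0 < t /\ b - a = t *: v.

(* lattice diameter: the maximum (here: supremum, which is attained for
   convex bodies) of lattice lengths of lattice segments contained in C *)
Definition lattice_diam (L : set V) (C : set V) : R :=
  sup [set t | exists a b, segment a b `<=` C /\ lattice_segment_length L a b t].

Definition diameter_direction (L : set V) (C : set V) (v : V) : Prop :=
  L v /\ v != 0 /\ exists a, segment a (a + lattice_diam L C *: v) `<=` C.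

Definition lattice_complete (L : set V) (C : set V) : Prop :=
  convex_body C /\
  forall C' : set V, convex_body C' -> C `<=` C' -> C' <> C ->
    lattice_diam L C' <> lattice_diam L C.

(* d-simplex: convex hull of d+1 affinely independent points *)
Definition simplex (S : set V) : Prop :=
  exists p : 'I_d.+1 -> V,
    (\matrix_(i < d, j < d) (p (lift ord0 i) - p ord0) 0 j) \in unitmx /\
    S = [set x | exists l : 'I_d.+1 -> R,
           (forall i, 0 <= l i) /\ \sum_i l i = 1 /\ x = \sum_i l i *: p i].

Definition spans (A : set V) : Prop :=
  forall x : V, exists n (c : 'I_n -> R) (w : 'I_n -> V),
    (forall i, A (w i)) /\ x = \sum_i c i *: w i.

End Defs.

From HB Require Import structures.
From mathcomp Require Import all_boot all_order all_algebra.
From mathcomp Require Import all_classical all_reals all_analysis.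
From mathcomp Require Import ring lra.
Import Order.TTheory GRing.Theory Num.Theory.
Import numFieldNormedType.Exports.
Local Open Scope classical_set_scope.
Local Open Scope ring_scope.
Set Implicit Arguments. Unset Strict Implicit.

(* Let [bary i] be the barycentric coordinates of the simplex with vertices
   [p i] and [dbary i] their linear parts. The longest chord of the simplex
   parallel to [v] is [(N v)^-1 *: v], where [N v] is the sum of the positive
   [dbary i v]; so the lattice diameter is [D = sup (N v)^-1] over primitive
   lattice vectors [v], and the diameter directions are the [v] with
   [D * N v = 1]. Call [v] pointing to vertex [k] if [dbary k v > 0] and all
   other [dbary i v < 0]; vectors pointing to each of the [d + 1] vertices span
   the space. If no diameter direction points to [k], push the facet opposite
   [p k] outwards by a small [eps]. A lattice chord [t *: v] of the larger body
   still has [t * N v <= 1] unless [v] or [- v] points to [k], and then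
   [t * N v <= 1 + 2 eps]. Lattice vectors with [D * N v < 2] are finitely
   many, so [D * N v] is bounded away from [1] off the diameter directions, and
   for small [eps] the lattice diameter does not grow: this contradicts
   completeness. *)

Section Barycentric.
Variables (R : realType) (d : nat) (p : 'I_d.+1 -> 'rV[R]_d).

Definition edge_mx : 'M[R]_d :=
  \matrix_(i < d, j < d) (p (lift ord0 i) - p ord0) 0 j.

(* [dbary i] is the linear part of the [i]-th barycentric coordinate: for
   [i = lift ord0 j] the [j]-th coordinate in the edge basis [p i - p ord0],
   and for [ord0] minus their sum. *)
Definition dbary (i : 'I_d.+1) (v : 'rV[R]_d) : R :=
  if unlift ord0 i is Some j then (v *m invmx edge_mx) 0 j
  else - \sum_j (v *m invmx edge_mx) 0 j.

Definition bary (i : 'I_d.+1) (x : 'rV[R]_d) : R :=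
  (i == ord0)%:R + dbary i (x - p ord0).

Definition simplex_hull : set 'rV[R]_d :=
  [set x | exists l : 'I_d.+1 -> R,
     (forall i, 0 <= l i) /\ \sum_i l i = 1 /\ x = \sum_i l i *: p i].

Lemma dbary_lift j v : dbary (lift ord0 j) v = (v *m invmx edge_mx) 0 j.
Proof. by rewrite /dbary liftK. Qed.

Lemma dbary_ord0 v : dbary ord0 v = - \sum_j (v *m invmx edge_mx) 0 j.
Proof. by rewrite /dbary unlift_none. Qed.

Lemma dbaryD i u w : dbary i (u + w) = dbary i u + dbary i w.
Proof.
rewrite /dbary; case: (unlift ord0 i) => [j|]; rewrite mulmxDl ?mxE //.
by rewrite -opprD -big_split; congr (- _); apply: eq_bigr => j _; rewrite mxE.
Qed.

Lemma dbaryZ i t u : dbary i (t *: u) = t * dbary i u.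
Proof.
rewrite /dbary; case: (unlift ord0 i) => [j|]; rewrite -scalemxAl ?mxE //.
by rewrite mulrN mulr_sumr; congr (- _); apply: eq_bigr => j _; rewrite mxE.
Qed.

Lemma dbaryN i u : dbary i (- u) = - dbary i u.
Proof. by rewrite -scaleN1r dbaryZ mulN1r. Qed.

Lemma dbaryB i u w : dbary i (u - w) = dbary i u - dbary i w.
Proof. by rewrite dbaryD dbaryN. Qed.

Lemma sum_dbary v : \sum_i dbary i v = 0.
Proof.
rewrite big_ord_recl dbary_ord0.
by under [X in _ + X]eq_bigr do rewrite dbary_lift; rewrite addNr.
Qed.

Lemma bary_addZ i a t v : bary i (a + t *: v) = bary i a + t * dbary i v.
Proof. by rewrite /bary (addrAC a) [in LHS]dbaryD dbaryZ addrA. Qed.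

Lemma baryB i x y : bary i y - bary i x = dbary i (y - x).
Proof. by rewrite /bary opprD addrACA subrr add0r -dbaryB opprB addrA subrK. Qed.

Lemma sum_bary x : \sum_i bary i x = 1.
Proof.
by rewrite big_split /= sum_dbary addr0 big_ord_recl eqxx big1 ?addr0.
Qed.

Lemma sum_bary_neq k x : \sum_(i | i != k) bary i x = 1 - bary k x.
Proof.
have := sum_bary x; rewrite (bigID (pred1 k)) big_pred1_eq /= => <-.
by rewrite addrC addrK.
Qed.

Definition bary_sum (I : pred 'I_d.+1) (x : 'rV[R]_d) : R := \sum_(i | I i) bary i x.

Lemma bary_sum_addZ I a t v :
  bary_sum I (a + t *: v) = bary_sum I a + t * \sum_(i | I i) dbary i v.
Proof.
rewrite /bary_sum mulr_sumr -big_split.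
by apply: eq_bigr => i _; rewrite bary_addZ.
Qed.

Lemma bary_sumC I x : bary_sum I x = 1 - bary_sum (fun i => ~~ I i) x.
Proof. by have := sum_bary x; rewrite (bigID I) /= => <-; rewrite addrK. Qed.

Lemma row_edge_mx j : row j edge_mx = p (lift ord0 j) - p ord0.
Proof. by apply/rowP => l; rewrite !mxE. Qed.

Hypothesis edge_unit : edge_mx \in unitmx.

Lemma bary_decomp x : x = \sum_i bary i x *: p i.
Proof.
have -> : \sum_i bary i x *: p i =
    p ord0 + \sum_i dbary i (x - p ord0) *: (p i - p ord0).
  under eq_bigr do rewrite scalerDl.
  rewrite big_split /=; under [X in _ = _ + X]eq_bigr do rewrite scalerBr.
  rewrite sumrB -scaler_suml sum_dbary scale0r subr0; congr (_ + _).
  rewrite big_ord_recl eqxx scale1r big1 ?addr0 // => j _.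
  by rewrite eq_sym (negbTE (neq_lift _ _)) scale0r.
rewrite big_ord_recl subrr scaler0 add0r.
under eq_bigr do rewrite dbary_lift -row_edge_mx.
by rewrite -mulmx_sum_row mulmxKV // addrC subrK.
Qed.

Lemma bary_comb (l : 'I_d.+1 -> R) j :
  \sum_i l i = 1 -> bary j (\sum_i l i *: p i) = l j.
Proof.
move=> l1; set x := \sum_i l i *: p i.
have x_edge : x - p ord0 = (\row_j l (lift ord0 j)) *m edge_mx.
  rewrite mulmx_sum_row /x -[p ord0]scale1r -l1 scaler_suml -sumrB.
  rewrite big_ord_recl -scalerBr subrr scaler0 add0r.
  by apply: eq_bigr => i _; rewrite row_edge_mx mxE scalerBr.
have bary_lift i : dbary (lift ord0 i) (x - p ord0) = l (lift ord0 i).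
  by rewrite dbary_lift x_edge mulmxK // mxE.
rewrite /bary; case: (unliftP ord0 j) => [j'|] ->.
  by rewrite eq_sym (negbTE (neq_lift _ _)) add0r bary_lift.
rewrite eqxx dbary_ord0; under eq_bigr do rewrite -dbary_lift bary_lift.
by move: l1; rewrite big_ord_recl => <-; rewrite addrK.
Qed.

Lemma dbary_eq0 v : (forall i, dbary i v = 0) -> v = 0.
Proof.
move=> dv0; suff : v *m invmx edge_mx = 0.
  by move=> /(congr1 (mulmx^~ edge_mx)); rewrite mulmxKV // mul0mx.
by apply/rowP => j; rewrite [RHS]mxE -dbary_lift dv0.
Qed.

Lemma simplex_hullE : simplex_hull = [set x | forall i, 0 <= bary i x].
Proof.
apply/seteqP; split => x /=.
  by move=> [l [l0 [l1 ->]]] i; rewrite bary_comb.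
move=> bx0; exists (bary^~ x); split => //; split; first exact: sum_bary.
exact: bary_decomp.
Qed.

Lemma hull_bary_sum I x : simplex_hull x -> 0 <= bary_sum I x <= 1.
Proof.
rewrite simplex_hullE // => /= x_ge0.
by rewrite sumr_ge0 //= bary_sumC gerBl sumr_ge0.
Qed.

End Barycentric.

Section HullNorm.
Variables (R : realType) (d : nat) (p : 'I_d.+1 -> 'rV[R]_d).
Hypothesis edge_unit : edge_mx p \in unitmx.
Local Notation dbary := (dbary p).

(* The norm whose unit ball is the difference body of the simplex: the
   longest chord of the simplex parallel to [v] is [(hull_norm v)^-1 *: v]. *)
Definition hull_norm (v : 'rV[R]_d) : R := \sum_(i | 0 < dbary i v) dbary i v.

Definition pointing (k : 'I_d.+1) (v : 'rV[R]_d) : Prop :=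
  0 < dbary k v /\ forall i, i != k -> dbary i v < 0.

Lemma hull_norm_ge0 v : 0 <= hull_norm v.
Proof. by apply: sumr_ge0 => i /ltW. Qed.

Lemma hull_norm_nneg v : \sum_(i | 0 <= dbary i v) dbary i v = hull_norm v.
Proof.
rewrite /hull_norm big_mkcond [RHS]big_mkcond; apply: eq_bigr => i _.
by case: (ltrgtP 0 (dbary i v)) => // <-.
Qed.

Lemma hull_norm_neg v : \sum_(i | dbary i v < 0) dbary i v = - hull_norm v.
Proof.
have := sum_dbary p v; rewrite (bigID (fun i => 0 <= dbary i v)) /= hull_norm_nneg.
move=> /eqP; rewrite addr_eq0 => /eqP ->.
by rewrite opprK; apply: eq_bigl => i; rewrite ltNge.
Qed.

Lemma sum_norm_dbary v : \sum_i `|dbary i v| = hull_norm v *+ 2.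
Proof.
have -> : hull_norm v = \sum_i (if 0 < dbary i v then dbary i v else 0).
  by rewrite /hull_norm big_mkcond.
rewrite -sumrMnl.
transitivity (\sum_i ((if 0 < dbary i v then dbary i v else 0) *+ 2 - dbary i v));
  last by rewrite sumrB sum_dbary subr0.
apply: eq_bigr => i _; case: ltrP => [/gtr0_norm ->|/ler0_norm ->].
  by rewrite mulr2n addrK.
by rewrite mul0rn sub0r.
Qed.

Lemma hull_normN v : hull_norm (- v) = hull_norm v.
Proof.
rewrite /hull_norm; under eq_bigl do rewrite dbaryN oppr_gt0.
by under eq_bigr do rewrite dbaryN; rewrite sumrN hull_norm_neg opprK.
Qed.

Lemma hull_norm_gt0 v : v != 0 -> 0 < hull_norm v.
Proof.
move=> v0; rewrite lt_def hull_norm_ge0 andbT; apply: contra v0 => /eqP N0.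
have : \sum_i `|dbary i v| = 0 by rewrite sum_norm_dbary N0 mul0rn.
move=> /(psumr_eq0P (fun j _ => normr_ge0 _)) dv0.
by apply/eqP/(dbary_eq0 edge_unit) => i; apply/normr0_eq0/dv0.
Qed.

Lemma hull_norm_pointing k v : pointing k v -> hull_norm v = dbary k v.
Proof.
move=> [vk vi]; rewrite /hull_norm (eq_bigl (pred1 k)) ?big_pred1_eq // => i /=.
by case: eqVneq => [->|/vi /ltW]; rewrite ?vk // leNgt => /negbTE.
Qed.

Lemma pointing_weights_const (u : 'I_d.+1 -> 'rV[R]_d) (Y : 'I_d.+1 -> R) :
  (forall k, pointing k (u k)) -> (forall k, \sum_i dbary i (u k) * Y i = 0) ->
  forall i j, Y i = Y j.
Proof.
move=> up uY; case: (arg_maxP Y (isT : predT ord0)) => k _ Ymax.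
suff Yk i : Y i = Y k by move=> i j; rewrite !Yk.
have sum0 : \sum_i dbary i (u k) * (Y i - Y k) = 0.
  under eq_bigr do rewrite mulrBr.
  by rewrite sumrB uY -mulr_suml sum_dbary mul0r subr0.
have term_ge0 j : 0 <= dbary j (u k) * (Y j - Y k).
  case: (eqVneq j k) => [->|jk]; first by rewrite subrr mulr0.
  by apply: mulr_le0; [exact/ltW/(up k).2 | rewrite subr_le0; exact: Ymax].
case: (eqVneq i k) => [->//|ik].
have /(_ i isT)/eqP := psumr_eq0P (fun j _ => term_ge0 j) sum0.
by rewrite mulf_eq0 (lt_eqF ((up k).2 i ik)) subr_eq0 => /eqP.
Qed.

Lemma mulmx_dbary (z : 'cV[R]_d) v :
  (v *m z) 0 0 = \sum_j dbary (lift ord0 j) v * (edge_mx p *m z) j 0.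
Proof.
have -> : v *m z = v *m invmx (edge_mx p) *m (edge_mx p *m z).
  by rewrite mulmxA mulmxKV.
by rewrite mxE; apply: eq_bigr => j _; rewrite dbary_lift.
Qed.

Lemma pointing_span (u : 'I_d.+1 -> 'rV[R]_d) :
  (forall k, pointing k (u k)) -> forall x, exists c, x = \sum_k c k *: u k.
Proof.
move=> up; pose U := \matrix_k u k.
have annih (z : 'cV[R]_d) : (forall k, u k *m z = 0) -> z = 0.
  move=> uz; pose Y i := if unlift ord0 i is Some j then (edge_mx p *m z) j 0 else 0.
  have uY k : \sum_i dbary i (u k) * Y i = 0.
    rewrite big_ord_recl /Y unlift_none mulr0 add0r.
    by under eq_bigr do rewrite liftK; rewrite -mulmx_dbary uz mxE.
  have Pz0 : edge_mx p *m z = 0.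
    apply/matrixP => j l; rewrite ord1 [RHS]mxE.
    have := pointing_weights_const up uY (lift ord0 j) ord0.
    by rewrite /Y liftK unlift_none.
  by rewrite -(mulKmx edge_unit z) Pz0 mulmx0.
have : row_full U.
  rewrite /row_full -mxrank_tr -/(row_free U^T) -kermx_eq0.
  apply/eqP/row_matrixP => i; rewrite row0; set r := row i _.
  have rU : r *m U^T = 0 by apply/sub_kermxP; exact: row_sub.
  apply: trmx_inj; rewrite trmx0; apply: annih => k.
  have := congr1 (fun M => row k M) (congr1 trmx rU).
  by rewrite /= trmx_mul trmxK row_mul rowK trmx0 row0.
move=> Ufull x; have /submxP [c ->] := submx_full x Ufull; exists (c 0).
by rewrite mulmx_sum_row; under eq_bigr do rewrite rowK.
Qed.

End HullNorm.

Lemma finite_gap (R : realDomainType) (s : seq R) (m : R) :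
  exists2 c, m < c & forall x, x \in s -> m < x -> c <= x.
Proof.
elim: s => [|x s [c mc cs]]; first by exists (m + 1); rewrite ?ltrDl.
case: (ltP m x) => mx.
  exists (Num.min c x); first by rewrite lt_min mc mx.
  move=> y; rewrite in_cons => /orP[/eqP ->|ys] my; first by rewrite ge_min lexx orbT.
  by rewrite ge_min cs.
exists c => // y; rewrite in_cons => /orP[/eqP ->|/cs //].
by rewrite ltNge mx.
Qed.

Lemma int_box_finite (R : archiRealFieldType) (d n : nat) :
  exists s : seq 'rV[R]_d, forall z : 'rV[R]_d,
    (forall j, z 0 j \is a Num.int) -> (forall j, `|z 0 j| < n%:R) -> z \in s.
Proof.
pose dec (y : {ffun 'I_d -> 'I_(n + n).+1}) : 'rV[R]_d :=
  \row_j ((y j : nat)%:R - n%:R).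
exists [seq dec y | y <- enum {ffun 'I_d -> 'I_(n + n).+1}] => z zint zlt.
have shift_nat j : z 0 j + n%:R \is a Num.nat.
  rewrite natrEint rpredD ?natr_int ?zint //=.
  by have := zlt j; rewrite ltr_norml; lra.
apply/mapP; exists [ffun j => inord (Num.truncn (z 0 j + n%:R))].
  by rewrite mem_enum.
apply/rowP => j; rewrite !mxE ffunE inordK ?truncnK ?addrK //.
rewrite -(ltr_nat R) truncnK // mulrSr natrD.
by have := zlt j; rewrite ltr_norml; lra.
Qed.

Section LatticeSegments.
Variables (R : realType) (d : nat).
Implicit Types (L C : set 'rV[R]_d) (B : 'M[R]_d).

Definition lattice_lengths L C : set R :=
  [set t | exists a b, segment a b `<=` C /\ lattice_segment_length L a b t].

Lemma lattice_diamE L C : lattice_diam L C = sup (lattice_lengths L C).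
Proof. by []. Qed.

Lemma lattice_lengthsS L C C' :
  C `<=` C' -> lattice_lengths L C `<=` lattice_lengths L C'.
Proof.
by move=> CC' t [a [b [/subset_trans abC ls]]]; exists a, b; split => //; apply: abC.
Qed.

Lemma segment_ends a b C : segment a b `<=` C -> C a /\ C b.
Proof.
move=> abC; split; apply: abC.
  by exists 0; [rewrite /= lexx ler01 | rewrite scale0r addr0].
by exists 1; [rewrite /= lexx ler01 | rewrite scale1r addrC subrK].
Qed.

Lemma lattice_ofN B v : lattice_of B v -> lattice_of B (- v).
Proof.
by move=> [z [zint ->]]; exists (- z); split => [j|]; rewrite ?mxE ?rpredN // mulNmx.
Qed.

Lemma diameter_directionN B C v :
  diameter_direction (lattice_of B) C v -> diameter_direction (lattice_of B) C (- v).
Proof.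
move=> [Lv [v0 [a abC]]]; split; first exact: lattice_ofN.
split; first by rewrite oppr_eq0.
exists (a + lattice_diam (lattice_of B) C *: v) => _ [s /andP[s0 s1] <-]; apply: abC.
exists (1 - s); first by rewrite /= subr_ge0 s1 lerBlDr lerDl.
by apply/rowP => j; rewrite !mxE; ring.
Qed.

Lemma primitive_exists B :
  B \in unitmx -> (0 < d)%N -> exists v, primitive (lattice_of B) v.
Proof.
move=> Bu d_gt0; pose j0 := Ordinal d_gt0; pose e : 'rV[R]_d := \row_j (j == j0)%:R.
have ej0 : e 0 j0 = 1 by rewrite mxE eqxx.
exists (e *m B); split; [|split].
- by exists e; split => // j; rewrite mxE natr_int.
- apply: contra_neq (@oner_neq0 R) => /(congr1 (mulmx^~ (invmx B))).
  by rewrite /= mulmxK // mul0mx -ej0 => ->; rewrite mxE.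
- move=> t [z [zint]]; rewrite scalemxAl => /(congr1 (mulmx^~ (invmx B))).
  rewrite /= !mulmxK // => /(congr1 (fun M : 'rV[R]_d => M 0 j0)).
  by rewrite mxE ej0 mulr1 => ->.
Qed.

Lemma spans_pointing (p : 'I_d.+1 -> 'rV[R]_d) (A : set 'rV[R]_d) :
  edge_mx p \in unitmx -> (forall k, exists u, A u /\ pointing p k u) -> spans A.
Proof.
move=> edge_unit /fin_all_exists [u Au] x.
have [c ->] := pointing_span edge_unit (fun k => (Au k).2) x.
by exists d.+1, c, u; split => // k; exact: (Au k).1.
Qed.

End LatticeSegments.

Section SimplexLattice.
Variables (R : realType) (d : nat) (B : 'M[R]_d) (p : 'I_d.+1 -> 'rV[R]_d).
Hypotheses (B_unit : B \in unitmx) (edge_unit : edge_mx p \in unitmx).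

Local Notation L := (lattice_of B).
Local Notation S := (simplex_hull p).
Local Notation N := (hull_norm p).
Local Notation D := (lattice_diam L S).

Lemma hull_chord_le a t v : S a -> S (a + t *: v) -> t * N v <= 1.
Proof.
move=> Sa Sb; pose I i := 0 < dbary p i v.
have /andP[a_ge0 _] := hull_bary_sum edge_unit I Sa.
have /andP[_] := hull_bary_sum edge_unit I Sb.
by rewrite bary_sum_addZ -/(hull_norm p v); lra.
Qed.

Lemma hull_longest_chord v : v != 0 -> exists a, segment a (a + (N v)^-1 *: v) `<=` S.
Proof.
move=> v0; have N_gt0 := hull_norm_gt0 edge_unit v0.
pose l i := (if dbary p i v < 0 then - dbary p i v else 0) / N v.
have l1 : \sum_i l i = 1.
  by rewrite -mulr_suml -big_mkcond /= sumrN hull_norm_neg opprK mulfV ?gt_eqF.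
exists (\sum_i l i *: p i) => _ [s /andP[s0 s1] <-].
rewrite simplex_hullE // => i /=.
rewrite addrAC subrr add0r scalerA bary_addZ bary_comb //.
rewrite /l; have Ninv_gt0 : 0 < (N v)^-1 by rewrite invr_gt0.
case: ltP => vi; last by rewrite mul0r add0r !mulr_ge0 // ltW.
have : 0 <= (N v)^-1 * - dbary p i v by rewrite mulr_ge0 ?ltW // oppr_gt0.
nra.
Qed.

Definition coord_const : R := 2 * \sum_l \sum_j `|(edge_mx p *m invmx B) l j|.

Lemma coord_const_ge0 : 0 <= coord_const.
Proof. by rewrite mulr_ge0 // !sumr_ge0 // => l _; rewrite sumr_ge0. Qed.

Lemma lattice_coord_le (z : 'rV[R]_d) j : `|z 0 j| <= coord_const * N (z *m B).
Proof.
set E := edge_mx p *m invmx B; set M := \sum_l \sum_j `|E l j|.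
set c := z *m B *m invmx (edge_mx p).
have zE : z = c *m E by rewrite /E mulmxA mulmxKV // mulmxK.
have EM l : `|E l j| <= M.
  rewrite /M (bigD1 l) //= (bigD1 j) //= -addrA lerDl.
  by rewrite addr_ge0 ?sumr_ge0 // => *; rewrite sumr_ge0.
have c_le : \sum_l `|c 0 l| <= N (z *m B) *+ 2.
  rewrite -sum_norm_dbary big_ord_recl.
  by under [X in _ <= _ + X]eq_bigr do rewrite dbary_lift; rewrite lerDr.
rewrite {1}zE mxE (le_trans (ler_norm_sum _ _ _)) //.
apply: le_trans (_ : \sum_l `|c 0 l| * M <= _).
  by apply: ler_sum => l _; rewrite normrM ler_wpM2l.
rewrite -mulr_suml /coord_const -/E -/M mulrAC mulr_natl ler_wpM2r //.
by rewrite !sumr_ge0 // => l _; rewrite sumr_ge0.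
Qed.

Lemma lattice_hull_norm_ge1 v : L v -> v != 0 -> 1 <= coord_const * N v.
Proof.
move=> [z [zint ->]] v0.
have [j zj0] : exists j, z 0 j != 0.
  apply/existsP; apply: contraR v0 => /existsPn z0.
  apply/eqP; rewrite -(mul0mx _ B); congr (_ *m _).
  by apply/rowP => j; rewrite mxE; apply/eqP/negPn/z0.
exact: le_trans (norm_intr_ge1 (zint j) zj0) (lattice_coord_le z j).
Qed.

Lemma hull_lattice_length_le t : lattice_lengths L S t -> t <= coord_const.
Proof.
move=> [a [b [abS [v [[Lv [v0 _]] [t_gt0 ba]]]]]].
have [Sa Sb] := segment_ends abS.
have : t * N v <= 1 by apply: (hull_chord_le Sa); rewrite -ba addrC subrK.
have := lattice_hull_norm_ge1 Lv v0; have := coord_const_ge0; have := hull_norm_ge0 p v.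
nra.
Qed.

Lemma hull_lattice_lengths_bounded : has_ubound (lattice_lengths L S).
Proof. by exists coord_const => t /hull_lattice_length_le. Qed.

Lemma primitive_hull_length v : primitive L v -> lattice_lengths L S (N v)^-1.
Proof.
move=> pv; have [_ [v0 _]] := pv; have [a aS] := hull_longest_chord v0.
exists a, (a + (N v)^-1 *: v); split => //; exists v; split => //; split.
  by rewrite invr_gt0 hull_norm_gt0.
by rewrite addrAC subrr add0r.
Qed.

Lemma diam_hull_norm_ge1 v : primitive L v -> 1 <= D * N v.
Proof.
move=> pv; have [_ [v0 _]] := pv; have N_gt0 := hull_norm_gt0 edge_unit v0.
rewrite -ler_pdivrMr // div1r lattice_diamE.
exact: (ub_le_sup hull_lattice_lengths_bounded (primitive_hull_length pv)).
Qed.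

Lemma diam_gt0 : (0 < d)%N -> 0 < D.
Proof.
move=> /(primitive_exists B_unit) [v /diam_hull_norm_ge1 DN_ge1].
rewrite ltNge; apply/negP => D_le0.
have : D * N v <= 0 by rewrite mulr_le0_ge0 ?hull_norm_ge0.
lra.
Qed.

Lemma primitive_nondiameter v :
  primitive L v -> ~ diameter_direction L S v -> 1 < D * N v.
Proof.
move=> pv nd; rewrite lt_def diam_hull_norm_ge1 // andbT.
apply: contra_notN nd => /eqP DN1; have [Lv [v0 _]] := pv; split => //; split => //.
have [a aS] := hull_longest_chord v0; exists a.
have N_neq0 := lt0r_neq0 (hull_norm_gt0 edge_unit v0).
suff -> : D = (N v)^-1 by [].
by apply: (mulIf N_neq0); rewrite mulVf.
Qed.

Lemma diam_gap : (0 < d)%N ->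
  exists2 c, 1 < c & forall v, L v -> 1 < D * N v -> c <= D * N v.
Proof.
move=> /diam_gt0 D_gt0.
have [n nbound] : exists n : nat, 2 * coord_const / D < n%:R.
  exists (Num.Def.archi_bound (2 * coord_const / D)); apply: archi_boundP.
  exact: divr_ge0 (mulr_ge0 _ coord_const_ge0) (ltW D_gt0).
have [s sbox] := int_box_finite R d n.
have [c c_gt1 gap] := finite_gap [seq D * N (z *m B) | z <- s] 1.
exists (Num.min c 2); first by rewrite lt_min c_gt1 /=; lra.
move=> _ [z [zint ->]] DN_gt1; case: (leP 2 (D * N (z *m B))) => [DN_ge2|DN_lt2].
  by rewrite ge_min DN_ge2 orbT.
rewrite ge_min gap //; apply: map_f; apply: sbox => // j.
apply: le_lt_trans (lattice_coord_le z j) (le_lt_trans _ nbound).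
rewrite ler_pdivlMr //; have := coord_const_ge0; nra.
Qed.

End SimplexLattice.

Lemma continuous_sum (R : numFieldType) (T : topologicalType) (I : Type)
    (s : seq I) (F : I -> T -> R) :
  (forall i, continuous (F i)) -> continuous (fun x => \sum_(i <- s) F i x).
Proof.
move=> Fc; elim: s => [|i s IHs] /=.
  under eq_fun do rewrite big_nil.
  exact: cst_continuous.
under eq_fun do rewrite big_cons.
by move=> x; apply: continuousD; [exact: Fc | exact: IHs].
Qed.

Lemma mulmx_coord_continuous (R : numFieldType) (m n : nat) (M : 'M[R]_(m, n)) j :
  continuous (fun v : 'rV[R]_m => (v *m M) 0 j).
Proof.
under eq_fun do rewrite mxE.
apply: continuous_sum => l x; apply: continuousM; last exact: cst_continuous.
exact: coord_continuous.
Qed.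

Section BaryContinuity.
Variables (R : realType) (d : nat) (p : 'I_d.+1 -> 'rV[R]_d).

Lemma dbary_continuous i : continuous (dbary p i).
Proof.
rewrite /dbary; case: (unlift ord0 i) => [j|]; first exact: mulmx_coord_continuous.
move=> x; apply: continuousN; apply: continuous_sum => j.
exact: mulmx_coord_continuous.
Qed.

Lemma bary_continuous i : continuous (bary p i).
Proof.
have -> : bary p i = cst ((i == ord0)%:R - dbary p i (p ord0)) + dbary p i.
  by apply: funext => x; rewrite /bary dbaryB !fctE addrA addrAC.
by move=> x; apply: continuousD; [exact: cst_continuous | exact: dbary_continuous].
Qed.

End BaryContinuity.

Section ExtendedSimplex.
Variables (R : realType) (d : nat) (B : 'M[R]_d) (p : 'I_d.+1 -> 'rV[R]_d).
Hypotheses (B_unit : B \in unitmx) (edge_unit : edge_mx p \in unitmx).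
Variables (k : 'I_d.+1) (eps : R).
Hypotheses (d_gt0 : (0 < d)%N) (eps_gt0 : 0 < eps) (eps_le : eps <= 1/2).

Local Notation L := (lattice_of B).
Local Notation S := (simplex_hull p).
Local Notation N := (hull_norm p).
Local Notation D := (lattice_diam L S).
Local Notation bary := (bary p).

(* [S] pushed outwards across its facet opposite [p k]. *)
Definition ext_simplex : set 'rV[R]_d :=
  [set x | forall i, i != k -> 0 <= bary i x /\ 0 <= bary k x + eps * bary i x].

Local Notation K := ext_simplex.

Lemma hull_sub_ext : S `<=` K.
Proof.
move=> x; rewrite simplex_hullE // => /= x_ge0 i _; split => //.
by rewrite addr_ge0 // mulr_ge0 // ltW.
Qed.

Lemma other_vertex : exists i, i != k.
Proof.
have [->|k0] := eqVneq k ord0; last by exists ord0; rewrite eq_sym.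
by exists (lift ord0 (Ordinal d_gt0)); rewrite eq_sym neq_lift.
Qed.

Lemma ext_bary_le x i : K x -> i != k -> bary i x <= 1 - bary k x.
Proof.
move=> Kx ik; rewrite -sum_bary_neq (bigD1 i) //= lerDl.
by apply: sumr_ge0 => j /andP[jk _]; exact: (Kx j jk).1.
Qed.

Lemma ext_bary_k_le1 x : K x -> bary k x <= 1.
Proof.
move=> Kx; rewrite -subr_ge0 -sum_bary_neq.
by apply: sumr_ge0 => i ik; exact: (Kx i ik).1.
Qed.

Lemma ext_bary_k_ge x : K x -> - (2 * eps) <= bary k x.
Proof.
move=> Kx; have [i ik] := other_vertex; have [xi_ge0 xki_ge0] := Kx i ik.
have : eps * bary i x <= eps * (1 - bary k x).
  by apply: ler_wpM2l; [exact: ltW | exact: ext_bary_le].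
have [xk_lt0|] := ltrP (bary k x) 0; last by move: eps_gt0; lra.
have : (1/2) * bary k x <= eps * bary k x by rewrite ler_wnM2r // ltW.
lra.
Qed.

Lemma ext_bary_norm_le x i : K x -> `|bary i x| <= 2.
Proof.
move=> Kx; have := ext_bary_k_le1 Kx; have := ext_bary_k_ge Kx.
case: (eqVneq i k) => [->|ik] xk_ge xk_le.
  by rewrite ler_norml; apply/andP; split; move: eps_le; lra.
have := ext_bary_le Kx ik; rewrite ger0_norm; last exact: (Kx i ik).1.
by move: eps_le; lra.
Qed.

Lemma ext_bary_sum_ge0 (I : pred 'I_d.+1) x : K x ->
  ~~ I k \/ (exists2 i, i != k & I i) -> 0 <= bary_sum p I x.
Proof.
move=> Kx Ik; have [kI|nkI] := boolP (I k); last first.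
  apply: sumr_ge0 => i Ii; have ik : i != k by apply: contraNneq nkI => <-.
  exact: (Kx i ik).1.
have [i ik Ii] : exists2 i, i != k & I i by case: Ik => //; rewrite kI.
rewrite /bary_sum (bigD1 k) //= (bigD1 i) /=; last by rewrite Ii ik.
have [xi_ge0 xki_ge0] := Kx i ik.
have : 0 <= \sum_(j | (I j && (j != k)) && (j != i)) bary j x.
  by apply: sumr_ge0 => j /andP[/andP[_ jk] _]; exact: (Kx j jk).1.
have : eps * bary i x <= bary i x by rewrite ler_piMl // (le_trans eps_le) //; lra.
lra.
Qed.

Lemma ext_bary_sum_le1 (I : pred 'I_d.+1) x : K x ->
  I k \/ (exists2 i, i != k & ~~ I i) -> bary_sum p I x <= 1.
Proof.
move=> Kx Ik; rewrite bary_sumC gerBl; apply: ext_bary_sum_ge0 => //.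
by rewrite negbK.
Qed.

Lemma ext_convex : convex K.
Proof.
move=> x y s Kx Ky /andP[s0 s1] i ik.
have bary_mix j : bary j ((1 - s) *: x + s *: y) = (1 - s) * bary j x + s * bary j y.
  have -> : (1 - s) *: x + s *: y = x + s *: (y - x).
    by apply/rowP => l; rewrite !mxE; ring.
  by rewrite bary_addZ -baryB; ring.
have [xi_ge0 xki_ge0] := Kx i ik; have [yi_ge0 yki_ge0] := Ky i ik.
by rewrite !bary_mix; split; nra.
Qed.

Lemma ext_closed : closed K.
Proof.
have -> : K = \bigcap_(i in [set i | i != k])
    (bary i @^-1` [set r | 0 <= r] `&`
     (fun x => bary k x + eps * bary i x) @^-1` [set r | 0 <= r]).
  by apply/seteqP; split => x Kx i /Kx.
apply: closed_bigI => i _; apply: closedI.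
  by apply: preimage_closed; [move=> x _; exact: bary_continuous | exact: closed_ge].
apply: preimage_closed; last exact: closed_ge.
move=> x _; apply: continuousD; first exact: bary_continuous.
by apply: continuousM; [exact: cst_continuous | exact: bary_continuous].
Qed.

Lemma ext_bounded : bounded_set K.
Proof.
exists (\sum_i 2 * `|p i|); split; first exact: num_real.
move=> M /ltW M_gt x Kx /=; apply: le_trans M_gt.
rewrite [X in `|X|](bary_decomp edge_unit x).
apply: le_trans (ler_norm_sum _ _ _) _; apply: ler_sum => i _.
by rewrite normrZ ler_wpM2r // ext_bary_norm_le.
Qed.

Lemma ext_convex_body : convex_body S -> convex_body K.
Proof.
move=> [_ [_ [x Sx]]]; split; last split.
- exact: bounded_closed_compact ext_bounded ext_closed.
- exact: ext_convex.
- by exists x; apply: interiorS hull_sub_ext _ Sx.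
Qed.

(* The point with [bary k = - eps / d] and the other coordinates equal lies
   in [K] but not in [S]. *)
Lemma ext_neq : K <> S.
Proof.
move=> KS; have d_pos : 0 < d%:R :> R by rewrite ltr0n.
pose del := eps / d%:R; have del_gt0 : 0 < del by rewrite divr_gt0.
pose mu i := if i == k then - del else (1 + del) / d%:R.
have mu1 : \sum_i mu i = 1.
  rewrite (bigD1 k) //= {1}/mu eqxx (eq_bigr (fun=> (1 + del) / d%:R)); last first.
    by move=> i /negbTE; rewrite /mu => ->.
  rewrite sumr_const cardC1 card_ord /= -[X in _ + X]mulr_natr divfK ?gt_eqF //.
  by rewrite addrC addrK.
have : K (\sum_i mu i *: p i).
  move=> i ik; rewrite !bary_comb // /mu eqxx (negbTE ik); split.
    by rewrite divr_ge0 ?ltW // addr_gt0 ?ltr01.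
  rewrite (_ : eps * _ = del * (1 + del)); last by rewrite /del mulrAC mulrA.
  by move: del_gt0; nra.
rewrite KS simplex_hullE // => /(_ k); rewrite bary_comb // /mu eqxx oppr_ge0.
by rewrite leNgt del_gt0.
Qed.

Lemma ext_chord_pointing a t v : K a -> K (a + t *: v) -> pointing p k v ->
  t * N v <= 1 + 2 * eps.
Proof.
move=> Ka Kb vk; rewrite (hull_norm_pointing vk).
have := ext_bary_k_ge Ka; have := ext_bary_k_le1 Kb.
by rewrite bary_addZ; lra.
Qed.

(* On [K], [bary_sum p I] stays in [0, 1] unless [I] is [pred1 k] or its
   complement; the two alternatives below exclude exactly these cases. *)
Lemma nonpointing_index_set v : ~ pointing p k v -> ~ pointing p k (- v) ->
  exists I : pred 'I_d.+1, [/\ \sum_(i | I i) dbary p i v = N v,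
    ~~ I k \/ (exists2 i, i != k & I i) & I k \/ (exists2 i, i != k & ~~ I i)].
Proof.
move=> nvk nvk'; have Q_sum := hull_norm_nneg p v.
case: (ltrgtP (dbary p k v) 0) => vk.
- exists (fun i => 0 < dbary p i v); split => //; first by left; rewrite -leNgt ltW.
  right; apply: contrapT => none; apply: nvk'; split; first by rewrite dbaryN oppr_gt0.
  move=> i ik; rewrite dbaryN oppr_lt0; apply: contrapT => vi.
  by apply: none; exists i => //; apply/negP.
- exists (fun i => 0 <= dbary p i v); split => //; last by left; exact: ltW.
  right; apply: contrapT => none; apply: nvk; split => // i ik.
  by rewrite ltNge; apply/negP => vi; apply: none; exists i.
- have [Q_other|none] := pselect (exists2 i, i != k & 0 <= dbary p i v).
    by exists (fun i => 0 <= dbary p i v); split; [| right | left; rewrite vk].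
  exists (fun i => 0 < dbary p i v); split => //; first by left; rewrite vk ltxx.
  right; have [i ik] := other_vertex; exists i => //.
  by apply/negP => vi; apply: none; exists i => //; exact: ltW.
Qed.

Lemma ext_chord_nonpointing a t v : K a -> K (a + t *: v) ->
  ~ pointing p k v -> ~ pointing p k (- v) -> t * N v <= 1.
Proof.
move=> Ka Kb nvk nvk'.
have [I [I_sum I_ge0 I_le1]] := nonpointing_index_set nvk nvk'.
have := ext_bary_sum_ge0 Ka I_ge0; have := ext_bary_sum_le1 Kb I_le1.
by rewrite bary_sum_addZ I_sum; lra.
Qed.

Hypothesis no_pointing_diam : forall u, diameter_direction L S u -> ~ pointing p k u.
Hypothesis diam_gap_eps : forall v, L v -> 1 < D * N v -> 1 + 2 * eps <= D * N v.

Lemma ext_lattice_length_le t : lattice_lengths L K t -> t <= D.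
Proof.
move=> [a [b [abK [v [pv [t_gt0 ba]]]]]].
have [Lv [v0 _]] := pv; have [Ka Kb] := segment_ends abK.
have bE : b = a + t *: v by rewrite -ba addrC subrK.
rewrite -(ler_pM2r (hull_norm_gt0 edge_unit v0)).
have long_chord : ~ diameter_direction L S v -> t * N v <= 1 + 2 * eps ->
    t * N v <= D * N v.
  move=> nd /le_trans; apply; apply: diam_gap_eps => //.
  by have := primitive_nondiameter B_unit edge_unit pv nd; apply.
have [vk|nvk] := pselect (pointing p k v).
  apply: long_chord; first by move/no_pointing_diam.
  by apply: ext_chord_pointing Ka _ vk; rewrite -bE.
have [vk'|nvk'] := pselect (pointing p k (- v)).
  apply: long_chord; first by move=> /diameter_directionN /no_pointing_diam.
  rewrite -hull_normN; apply: ext_chord_pointing Kb _ vk'.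
  by rewrite bE scalerN addrK.
apply: le_trans (diam_hull_norm_ge1 B_unit edge_unit pv).
by apply: ext_chord_nonpointing Ka _ nvk nvk'; rewrite -bE.
Qed.

Lemma ext_lattice_diam : lattice_diam L K = D.
Proof.
have [t St] : lattice_lengths L S !=set0.
  have [v pv] := primitive_exists B_unit d_gt0.
  by exists (N v)^-1; exact: primitive_hull_length.
have K_ub : ubound (lattice_lengths L K) D by move=> u /ext_lattice_length_le.
apply/eqP; rewrite eq_le !lattice_diamE; apply/andP; split.
  by apply: ge_sup K_ub; exists t; exact: lattice_lengthsS hull_sub_ext _ St.
apply: ge_sup; first by exists t.
move=> u Su; apply: ub_le_sup; first by exists D.
exact: lattice_lengthsS hull_sub_ext _ Su.
Qed.

End ExtendedSimplex.

Unset Implicit Arguments.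

Theorem proposition4p3 (R : realType) (d : nat) (B : 'M[R]_d) (S : set 'rV[R]_d) :
  B \in unitmx ->
  simplex S ->
  lattice_complete (lattice_of B) S ->
  spans (diameter_direction (lattice_of B) S).
Proof.
move=> B_unit [p [edge_unit ->]] [S_body S_complete].
have [d0|d_gt0] := posnP d.
  subst d => x; exists 0%N, (fun=> 0), (fun=> 0); split => [[] //|].
  by rewrite big_ord0; apply/rowP => -[].
apply: (spans_pointing edge_unit) => k.
apply: contrapT => no_diam_k; set L := lattice_of B.
have no_pointing_diam u : diameter_direction L (simplex_hull p) u -> ~ pointing p k u.
  by move=> du uk; apply: no_diam_k; exists u.
have [c c_gt1 gap] := diam_gap B_unit edge_unit d_gt0.
pose eps := Num.min (1/2) ((c - 1) / 2).
have eps_gt0 : 0 < eps by rewrite lt_min; apply/andP; split; lra.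
have eps_le : eps <= 1/2 by rewrite ge_min lexx.
have eps_c : 1 + 2 * eps <= c.
  have : eps <= (c - 1) / 2 by rewrite ge_min lexx orbT.
  lra.
apply: (S_complete (ext_simplex p k eps)).
- exact: ext_convex_body.
- exact: hull_sub_ext.
- exact: ext_neq.
- apply: ext_lattice_diam => // v Lv DN_gt1.
  exact: le_trans eps_c (gap v Lv DN_gt1).
Qed.
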